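(* For every integer $n\ge 4$, the ordered pair $(Q_{n+1},AC_n)$ is a duality pair; that is, for every digraph $G$, $G\to AC_n$ if and only if $Q_{n+1}\not\to G$.
   Context: A homomorphism $G\to H$ of digraphs is a vertex map sending arcs to arcs. An ordered pair of digraphs $(G,H)$ is a duality pair if for every digraph $L$: $G\not\to L$ if and only if $L\to H$. For $n\ge 3$, $Q_n$ is the oriented path $(q_0,\dots,q_{n-1})$ on $n$ distinct vertices, with exactly one arc between $q_i$ and $q_{i+1}$ for each $i$ and no other arcs, such that: the first two arcs are $q_0\to q_1$ and $q_1\to q_2$; the subpath $(q_1,\dots,q_{n-2})$ is alternating (consecutive arcs have opposite directions); and the last two arcs (between $q_{n-3},q_{n-2}$ and between $q_{n-2},q_{n-1}$) have the same direction. For $n\ge 3$, $AC_n$ is the oriented cycle with vertices $a_0,\dots,a_{n-1}$ obtained from the path $(a_0,\dots,a_n)$ in which the arc between $a_i$ and $a_{i+1}$ is $a_i\to a_{i+1}$ if $i$ is even and $a_{i+1}\to a_i$ if $i$ is odd, by identifying $a_n$ with $a_0$. *)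

From mathcomp Require Import all_boot.
Set Implicit Arguments. Unset Strict Implicit. Unset Printing Implicit Defensive.

(* A (finite) digraph is a finite type of vertices with an arc relation
   e : rel V  (e x y  means there is an arc x -> y). *)

Definition hom (V W : Type) (eG : rel V) (eH : rel W) : Prop :=
  exists f : V -> W, forall x y, eG x y -> eH (f x) (f y).

(* Direction of the arc between q_i and q_{i+1} in Q_n:
   true  means q_i -> q_{i+1},  false means q_{i+1} -> q_i. *)
Definition dirQ (n i : nat) : bool :=
  if i <= 1 then true else if i <= n - 3 then odd i else odd (n - 3).

Definition Q_rel (n : nat) : rel 'I_n :=
  fun x y => ((val y == (val x).+1) && dirQ n (val x))
          || ((val x == (val y).+1) && ~~ dirQ n (val y)).

Definition AC_rel (n : nat) : rel 'I_n :=
  fun x y => ((val y == (val x).+1 %% n) && ~~ odd (val x))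
          || ((val x == (val y).+1 %% n) && odd (val y)).

From mathcomp Require Import all_boot zify.
Set Implicit Arguments. Unset Strict Implicit.

(* For even n, AC_n has no directed path of length 2, while Q_{n+1} folds onto
   any directed path a -> b -> c; hence both sides of the equivalence say that
   G has no directed 2-path.

   For odd n, the only directed 2-path of AC_n is a_{n-1} -> a_0 -> a_1.  The
   middle vertices q_1 and q_{n-1} of the two directed 2-paths of Q_{n+1} would
   both be sent to a_0, and the n - 2 steps between them, an odd number smaller
   than n, cannot close up around the cycle.  Conversely, write n = 2k+3 and
   suppose Q_{n+1} does not map to G.  Call zigzag level of v the least number
   of zigzags (back along an arc, forward along another) leading to v from the
   head of a directed 2-path; a vertex of level at most k is a sink, since
   otherwise Q_{n+1} maps to G.  Sending a vertex with an in-neighbour of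
   level l to a_{2l+1} (to a_0 when l > k) and a source to a_{2l+2}, l the
   least level of its out-neighbours (to a_{2k+2} when l > k), is a
   homomorphism G -> AC_n. *)

Lemma modn_succ_small x n : x < n -> x.+1 %% n = if x.+1 == n then 0 else x.+1.
Proof. by move=> lt_xn; case: eqP => [->|ne]; [rewrite modnn | rewrite modn_small //; lia]. Qed.

Lemma AC_rel_inord n a b : a <= n -> b <= n ->
  AC_rel (inord a : 'I_n.+1) (inord b) =
  ((b == a.+1) || (a == n) && (b == 0)) && ~~ odd a ||
  ((a == b.+1) || (b == n) && (a == 0)) && odd b.
Proof.
move=> le_an le_bn; rewrite /AC_rel /= !inordK // !modn_succ_small // !eqSS.
by case: (a =P n) => [->|]; case: (b =P n) => [->|] //=; rewrite ?orbF; lia.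
Qed.

Lemma AC_rel_adjacent n (x y : 'I_n) :
  AC_rel x y -> val y = (val x).+1 %% n \/ val x = (val y).+1 %% n.
Proof. by case/orP=> /andP[/eqP-> _]; [left | right]. Qed.

Lemma AC_rel_path2 n (x y z : 'I_n) : AC_rel x y -> AC_rel y z -> odd n /\ val y = 0.
Proof.
case: x y z => [x lt_xn] [y lt_yn] [z lt_zn]; rewrite /AC_rel /= !modn_succ_small //.
case: (x.+1 =P n) => ?; case: (y.+1 =P n) => ?; case: (z.+1 =P n) => ?;
  case/orP=> /andP[/eqP ? ?]; case/orP=> /andP[/eqP ? ?]; subst; split; lia.
Qed.

Definition Q_walk (V : Type) (e : rel V) n (g : nat -> V) :=
  forall i, i < n -> if dirQ n.+1 i then e (g i) (g i.+1) else e (g i.+1) (g i).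

Lemma Q_rel_inord n i : i < n ->
  Q_rel (inord i : 'I_n.+1) (inord i.+1) = dirQ n.+1 i /\
  Q_rel (inord i.+1 : 'I_n.+1) (inord i) = ~~ dirQ n.+1 i.
Proof.
move=> lt_in; rewrite /Q_rel /= !inordK ?eqxx ?(ltn_eqF (leqnSn i.+1)) ?orbF //.
exact: ltnW.
Qed.

Lemma Q_homE (V : Type) (e : rel V) n :
  hom (@Q_rel n.+1) e <-> exists g : nat -> V, Q_walk e n g.
Proof.
split=> [[h hom_h] | [g walk_g]].
  exists (fun i => h (inord i)) => i /Q_rel_inord[arc_fw arc_bw].
  by case: dirQ arc_fw arc_bw => arc_fw arc_bw; apply: hom_h; rewrite ?arc_fw ?arc_bw.
exists (fun x => g (val x)) => -[x lt_x] [y lt_y]; rewrite /Q_rel /=.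
case/orP=> /andP[/eqP ? dir]; subst.
  by have := walk_g x lt_y; rewrite dir.
by have := walk_g y lt_x; rewrite (negbTE dir).
Qed.

Lemma hom_comp (U V W : Type) (eU : rel U) (eV : rel V) (eW : rel W) :
  hom eU eV -> hom eV eW -> hom eU eW.
Proof. by move=> [f hom_f] [g hom_g]; exists (g \o f) => x y /hom_f /hom_g. Qed.

(* [a] and [b] count the forward and backward steps of the walk. *)
Lemma cycle_walk_winding n (g : nat -> 'I_n) m :
  (forall i, i < m -> val (g i.+1) = (g i).+1 %% n \/ val (g i) = (g i.+1).+1 %% n) ->
  exists a b, a + b = m /\ (g m + b) %% n = (g 0 + a) %% n.
Proof.
elim: m => [|m IHm] adj_g; first by exists 0, 0.
have [a [b [ab winding]]] := IHm (fun i lt_im => adj_g i (ltnW lt_im)).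
case: (adj_g m (ltnSn m)) => [step | step].
  exists a.+1, b; split; first by rewrite addSn ab.
  by rewrite step modnDml addSn -addn1 -modnDml winding modnDml addn1 addnS.
exists a, b.+1; split; first by rewrite addnS ab.
by rewrite addnS -addSn -modnDml -step winding.
Qed.

Lemma Q_not_hom_AC n : 3 <= n -> ~ hom (@Q_rel n.+1) (@AC_rel n).
Proof.
move=> ge3_n /Q_homE[g walk_g].
have adj i : i < n -> val (g i.+1) = (g i).+1 %% n \/ val (g i) = (g i.+1).+1 %% n.
  move=> lt_in; have := walk_g i lt_in.
  by case: dirQ => /AC_rel_adjacent[]; [left | right | right | left].
have forward i : i < n -> dirQ n.+1 i -> AC_rel (g i) (g i.+1).
  by move=> lt_in dir; have := walk_g i lt_in; rewrite dir.
have [m def_n] : exists m, n = m.+2 by exists n.-2; lia.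
have [odd_n g1] : odd n /\ val (g 1) = 0.
  by apply: (AC_rel_path2 (forward 0 _ _) (forward 1 _ _)) => //; lia.
have [_ gm1] : odd n /\ val (g m.+1) = 0.
  apply: (AC_rel_path2 (forward m _ _) (forward m.+1 _ _)); rewrite /dirQ;
    by do ?case: ifP; lia.
have [a [b [ab]]] := @cycle_walk_winding n (fun i => g i.+1) m (fun i lt_im => adj i.+1 ltac:(lia)).
by rewrite /= gm1 g1 !add0n !modn_small; lia.
Qed.

Lemma Q_hom_of_path2 (V : Type) (e : rel V) k a b c :
  e a b -> e b c -> hom (@Q_rel (k.*2.+4).+1) e.
Proof.
move=> ab bc; apply/Q_homE.
pose g i := if (i == 0) || (i == k.*2.+4) then a else if odd i then b else c.
have g_mid i : 0 < i < k.*2.+4 -> g i = if odd i then b else c.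
  by move=> lt_i; rewrite /g ifN //; lia.
exists g => i lt_i.
have [->|[->|[mid|->]]] : i = 0 \/ i = 1 \/ 1 < i < k.*2.+3 \/ i = k.*2.+3 by lia.
- by rewrite (g_mid 1).
- by rewrite (g_mid 1) ?(g_mid 2) //; lia.
- have -> : dirQ (k.*2.+4).+1 i = odd i by rewrite /dirQ; do ?case: ifP; lia.
  by rewrite (g_mid i) ?(g_mid i.+1) /=; [case: (odd i) | lia | lia].
- have -> : dirQ (k.*2.+4).+1 k.*2.+3 = false by rewrite /dirQ; do ?case: ifP; lia.
  by rewrite (g_mid k.*2.+3) /= ?odd_double /g ?eqxx ?orbT //; lia.
Qed.

Lemma hom_AC_even (V : finType) (e : rel V) k :
  ~ hom (@Q_rel (k.*2.+4).+1) e -> hom e (@AC_rel (k.*2.+4)).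
Proof.
move=> noQ; exists (fun v => inord (~~ [exists w, e v w]) : 'I_(k.*2.+3).+1) => u v uv.
have -> : [exists w, e u w] by apply/existsP; exists v.
have -> : [exists w, e v w] = false.
  by apply/negbTE/existsP => -[w vw]; apply: noQ; apply: Q_hom_of_path2 uv vw.
by rewrite AC_rel_inord.
Qed.

Section ZigzagReach.

Variables (V : finType) (e : rel V).

Definition sibling w v := [exists s, e s w && e s v].

(* [zigzag_reach j v]: v ends a walk of G shaped like Q_{2j+4} without its
   last arc. *)
Fixpoint zigzag_reach j v :=
  if j is j'.+1 then [exists w, zigzag_reach j' w && sibling w v]
  else [exists a, exists b, e a b && e b v].

Definition zigzag_walk m (g : nat -> V) :=
  forall i, i < m -> if (i <= 1) || odd i then e (g i) (g i.+1) else e (g i.+1) (g i).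

Lemma zigzag_reach_walk j v :
  zigzag_reach j v -> exists g, zigzag_walk j.*2.+2 g /\ g j.*2.+2 = v.
Proof.
elim: j v => [|j IHj] v /=.
  case/existsP=> a /existsP[b /andP[ab bv]].
  by exists (nth v [:: a; b; v]); split=> // -[|[|[]]].
case/existsP=> w /andP[/IHj[g [walk_g gw]] /existsP[s /andP[sw sv]]].
pose g' i := if i == j.*2.+3 then s else if i == j.*2.+4 then v else g i.
have g'_low i : i <= j.*2.+2 -> g' i = g i by move=> le_i; rewrite /g' !ifN //; lia.
exists g'; split=> [i lt_i|]; last by rewrite doubleS /g' ifN ?eqxx //; lia.
have [lt_ij | [-> | ->]] : i < j.*2.+2 \/ i = j.*2.+2 \/ i = j.*2.+3 by lia.
- by rewrite !g'_low; [apply: walk_g | lia | lia].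
- by rewrite /= negbK odd_double (g'_low j.*2.+2) // gw /g' eqxx.
- by rewrite /= negbK odd_double /g' eqxx ifN ?eqxx //; lia.
Qed.

Lemma Q_hom_of_zigzag_reach k m y : zigzag_reach k m -> e m y -> hom (@Q_rel k.*2.+4) e.
Proof.
move=> /zigzag_reach_walk[g [walk_g gm]] my; apply/Q_homE.
exists (fun i => if i == k.*2.+3 then y else g i) => i lt_i.
have [lt_ik | ->] : i < k.*2.+2 \/ i = k.*2.+2 by lia.
  have -> : dirQ k.*2.+4 i = (i <= 1) || odd i by rewrite /dirQ; do ?case: ifP; lia.
  have [-> ->] : (i == k.*2.+3) = false /\ (i.+1 == k.*2.+3) = false by split; lia.
  exact: walk_g.
have -> : dirQ k.*2.+4 k.*2.+2 by rewrite /dirQ; do ?case: ifP; lia.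
by rewrite eqxx ifN ?gm //; lia.
Qed.

Lemma zigzag_reach_in_arc j v : zigzag_reach j v -> exists u, e u v.
Proof.
case: j => [|j] /existsP[a /=]; first by case/existsP=> b /andP[_ bv]; exists b.
by case/andP=> _ /existsP[s /andP[_ sv]]; exists s.
Qed.

Lemma zigzag_reachS j v : zigzag_reach j v -> zigzag_reach j.+1 v.
Proof.
move=> reach_v; have [u uv] := zigzag_reach_in_arc reach_v.
by apply/existsP; exists v; apply/andP; split=> //; apply/existsP; exists u; rewrite uv.
Qed.

Lemma zigzag_reach_mono j1 j2 v : j1 <= j2 -> zigzag_reach j1 v -> zigzag_reach j2 v.
Proof.
by move=> /subnK <-; elim: (j2 - j1) => // d IHd /IHd; apply: zigzag_reachS.
Qed.

End ZigzagReach.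

Section LeastUpto.

Variables (P : pred nat) (k : nat).

(* [k.+1] when no [j <= k] satisfies [P]. *)
Definition least_upto := find P (iota 0 k.+1).

Lemma least_upto_le : least_upto <= k.+1.
Proof. by have := find_size P (iota 0 k.+1); rewrite size_iota. Qed.

Lemma least_uptoP : least_upto <= k -> P least_upto.
Proof.
move=> le_k; have has_P : has P (iota 0 k.+1) by rewrite has_find size_iota.
by have := nth_find 0 has_P; rewrite nth_iota.
Qed.

Lemma least_upto_min j : j <= k -> P j -> least_upto <= j.
Proof.
move=> le_jk Pj; rewrite leqNgt; apply/negP => lt_j.
by have := before_find 0 lt_j; rewrite nth_iota ?add0n ?Pj.
Qed.

End LeastUpto.

Section OddCycle.

Variables (V : finType) (e : rel V) (k : nat).
Hypothesis noQ : ~ hom (@Q_rel k.*2.+4) e.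

Definition level v := least_upto (fun j => zigzag_reach e j v) k.

Definition out_level u := least_upto (fun j => [exists w, e u w && zigzag_reach e j w]) k.

Definition AC_label v :=
  if [exists u, e u v] then (if level v <= k then (level v).*2.+1 else 0)
  else if out_level v <= k then (out_level v).*2.+2 else k.*2.+2.

Lemma AC_label_le v : AC_label v <= k.*2.+2.
Proof. by rewrite /AC_label; do ?case: ifP; lia. Qed.

Lemma level_path2 x u v : e x u -> e u v -> level v = 0 /\ k < level u.
Proof.
move=> xu uv; split.
  apply/eqP; rewrite -leqn0 least_upto_min //.
  by apply/existsP; exists x; apply/existsP; exists u; apply/andP.
rewrite ltnNge; apply/negP => /[dup] le_k /least_uptoP /(zigzag_reach_mono le_k) reach_u.
by apply: noQ; apply: Q_hom_of_zigzag_reach reach_u uv.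
Qed.

Lemma out_level_le_level u v : e u v -> level v <= k -> out_level u <= level v.
Proof.
move=> uv /[dup] le_k /least_uptoP reach_v; apply: least_upto_min => //.
by apply/existsP; exists v; rewrite uv.
Qed.

Lemma level_le_out_levelS u v : e u v -> out_level u < k -> level v <= (out_level u).+1.
Proof.
move=> uv lt_k; have /existsP[w /andP[uw reach_w]] := least_uptoP (ltnW lt_k).
apply: least_upto_min lt_k _; apply/existsP; exists w; apply/andP; split=> //.
by apply/existsP; exists u; rewrite uw uv.
Qed.

Lemma hom_AC_odd : hom e (@AC_rel k.*2.+3).
Proof.
exists (fun v => inord (AC_label v) : 'I_(k.*2.+2).+1) => u v uv.
rewrite AC_rel_inord ?AC_label_le // /AC_label.
have -> : [exists x, e x v] by apply/existsP; exists u.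
have := least_upto_le (fun j => zigzag_reach e j v) k; rewrite -/(level v) => le_lv.
case: (boolP [exists x, e x u]) => [/existsP[x xu] | _].
  by have [-> lt_ku] := level_path2 xu uv; rewrite (leqNgt (level u)) lt_ku.
have := @out_level_le_level u v uv; have := @level_le_out_levelS u v uv.
by case: ifP; case: ifP; lia.
Qed.

End OddCycle.

Theorem mainTheorem8 (n : nat) (hn : 4 <= n) (V : finType) (e : rel V) :
  hom e (@AC_rel n) <-> ~ hom (@Q_rel n.+1) e.
Proof.
split=> [hom_AC hom_Q | noQ].
  by apply: (Q_not_hom_AC (ltnW hn)); apply: hom_comp hom_Q hom_AC.
have [k [def_n | def_n]] : exists k, n = k.*2.+4 \/ n = k.*2.+3.
  have := odd_double_half n; case: odd; move: n./2 => h /= def_n.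
    by exists (h - 1); right; lia.
  by exists (h - 2); left; lia.
- by move: noQ; rewrite def_n; apply: hom_AC_even.
- by rewrite def_n; apply: hom_AC_odd; rewrite -def_n.
Qed.
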